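(* Let $\mathcal{M}\subseteq\mathbb{S}^n$ be finite. If $\mathcal{T}(\mathcal{M}')$ is rank-one generated for every $\mathcal{M}'\subseteq\mathcal{M}$, then $\mathcal{S}(\mathcal{M})$ is rank-one generated.
   Context: $\mathbb{S}^n$ denotes real symmetric $n\times n$ matrices with $\langle A,B\rangle=\mathrm{tr}(AB)$, $\mathbb{S}^n_+$ the PSD cone. For $\mathcal{M}\subseteq\mathbb{S}^n$, $\mathcal{S}(\mathcal{M})=\{X\in\mathbb{S}^n_+:\langle M,X\rangle\ge0\ \forall M\in\mathcal{M}\}$ and $\mathcal{T}(\mathcal{M})=\{X\in\mathbb{S}^n_+:\langle M,X\rangle=0\ \forall M\in\mathcal{M}\}$ (so $\mathcal{T}(\emptyset)=\mathbb{S}^n_+$). A closed convex cone $\mathcal{S}\subseteq\mathbb{S}^n_+$ is rank-one generated (ROG) if $\mathcal{S}=\mathrm{conv}(\mathcal{S}\cap\{xx^\top:x\in\mathbb{R}^n\})$. *)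

From HB Require Import structures.
From mathcomp Require Import all_boot all_order all_algebra.
From mathcomp Require Import reals.
Set Implicit Arguments. Unset Strict Implicit. Unset Printing Implicit Defensive.
Import Order.TTheory GRing.Theory Num.Theory.
Local Open Scope ring_scope.

Section Defs.
Variables (R : realType) (n : nat).

Definition symm (X : 'M[R]_n) : Prop := X^T = X.

Definition psd (X : 'M[R]_n) : Prop :=
  symm X /\ forall x : 'cV[R]_n, 0 <= (x^T *m X *m x) ord0 ord0.

Definition inner (A B : 'M[R]_n) : R := \tr (A *m B).

Definition Scone (M : 'M[R]_n -> Prop) (X : 'M[R]_n) : Prop :=
  psd X /\ forall A, M A -> 0 <= inner A X.
Definition Tcone (M : 'M[R]_n -> Prop) (X : 'M[R]_n) : Prop :=
  psd X /\ forall A, M A -> inner A X = 0.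

Definition rank_one (Y : 'M[R]_n) : Prop := exists x : 'cV[R]_n, Y = x *m x^T.

Definition conv (P : 'M[R]_n -> Prop) (X : 'M[R]_n) : Prop :=
  exists (k : nat) (lam : 'I_k -> R) (Y : 'I_k -> 'M[R]_n),
    [/\ forall i, 0 <= lam i, \sum_(i < k) lam i = 1,
        forall i, P (Y i) & X = \sum_(i < k) lam i *: Y i].

Definition ROG (S : 'M[R]_n -> Prop) : Prop :=
  forall X, S X <-> conv (fun Y => S Y /\ rank_one Y) X.

End Defs.

From HB Require Import structures.
From mathcomp Require Import all_boot all_order all_algebra.
From mathcomp Require Import reals.
From mathcomp Require Import ring lra.
Set Implicit Arguments. Unset Strict Implicit. Unset Printing Implicit Defensive.
Import Order.TTheory GRing.Theory Num.Theory.
Local Open Scope ring_scope.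

(* Induct on the number of constraints of M that are slack at X in S(M).  The
   constraints active at X form some M' included in M, and X lies in T(M'), so
   by hypothesis X is a sum of rank-one matrices y y^T of T(M').  Moving from X
   along -y or +y keeps the active constraints active and stays PSD (up to
   X - y on one side, forever on the other).  On each side, either the segment
   stays in S(M), or it leaves S(M) at a point where one more constraint
   becomes active, which is handled by induction; X is a convex combination of
   the two points so obtained.  The only other case is that X - y is reached
   with the same active set, and then its shorter decomposition is used. *)

Lemma sub_in_count (T : eqType) (s : seq T) (p q : pred T) :
  {in s, forall x, p x -> q x} -> (count p s <= count q s)%N.
Proof.
move=> pq; rewrite -(@eq_in_count _ (predI p q)) ?sub_count // => [x /andP[] //|].
by move=> x xs /=; case: (boolP (p x)) => // /(pq x xs) ->.
Qed.

Lemma sub_in_count_lt (T : eqType) (s : seq T) (p q : pred T) :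
  {in s, forall x, p x -> q x} -> (exists2 x, x \in s & q x && ~~ p x) ->
  (count p s < count q s)%N.
Proof.
move=> pq [x xs /andP[qx npx]].
have -> : count p s = count p (filter q s).
  rewrite count_filter; apply: eq_in_count => y ys /=.
  by case: (boolP (p y)) => // /(pq y ys) ->.
rewrite -[count q s]size_filter -(count_predC p) -[X in (X < _)%N]addn0.
rewrite ltn_add2l -has_count.
by apply/hasP; exists x; rewrite // mem_filter qx.
Qed.

Lemma seq_argmin (T : eqType) (R : realDomainType) (s : seq T) (P : pred T)
    (r : T -> R) :
  has P s -> exists2 x, (x \in s) && P x & {in s, forall y, P y -> r x <= r y}.
Proof.
elim: s => //= y s IH; have [/IH [x /andP[xs Px] xmin] _|noP] := boolP (has P s).
  have [/andP[Py ryx]|nPy] := boolP (P y && (r y < r x)).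
    exists y; rewrite ?mem_head //= => z; rewrite inE => /orP[/eqP -> //|zs Pz].
    by rewrite (le_trans (ltW ryx)) ?xmin.
  exists x; rewrite ?inE ?xs ?orbT //= => z; rewrite inE => /orP[/eqP -> Py|].
    by move: nPy; rewrite Py /= -leNgt.
  exact: xmin.
rewrite orbF => Py; exists y; rewrite ?mem_head //= => z.
by rewrite inE => /orP[/eqP -> //|zs Pz]; move/hasPn: noP => /(_ z zs); rewrite Pz.
Qed.

Lemma combine_segment_ends (R : numFieldType) (V : lmodType R) (x v : V) (a b : R) :
  a + b != 0 -> x = (a + b)^-1 *: (b *: (x - a *: v) + a *: (x + b *: v)).
Proof.
move=> ab_neq0; have -> : b *: (x - a *: v) + a *: (x + b *: v) = (a + b) *: x.
  by rewrite scalerBr scalerDr !scalerA mulrC addrACA addNr addr0 addrC scalerDl.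
by rewrite scalerA mulVf ?scale1r.
Qed.

Section Cones.
Variables (R : realType) (n : nat).
Implicit Types (P : 'M[R]_n -> Prop) (A X Y Z D : 'M[R]_n).

Lemma innerDr A X Y : inner A (X + Y) = inner A X + inner A Y.
Proof. by rewrite /inner mulmxDr mxtraceD. Qed.

Lemma innerZr A a X : inner A (a *: X) = a * inner A X.
Proof. by rewrite /inner -scalemxAr mxtraceZ. Qed.

Lemma inner0r A : inner A 0 = 0.
Proof. by rewrite /inner mulmx0 mxtrace0. Qed.

Lemma innerNr A X : inner A (- X) = - inner A X.
Proof. by rewrite -scaleN1r innerZr mulN1r. Qed.

Lemma psd0 : psd (0 : 'M[R]_n).
Proof. by split=> [|x]; rewrite ?/symm ?trmx0 // mulmx0 mul0mx mxE. Qed.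

Lemma psdD X Y : psd X -> psd Y -> psd (X + Y).
Proof.
move=> [sX pX] [sY pY]; split; first by rewrite /symm linearD /= sX sY.
by move=> x; rewrite mulmxDr mulmxDl mxE addr_ge0.
Qed.

Lemma psdZ a X : 0 <= a -> psd X -> psd (a *: X).
Proof.
move=> a_ge0 [sX pX]; split; first by rewrite /symm linearZ /= sX.
by move=> x; rewrite -scalemxAr -scalemxAl mxE mulr_ge0.
Qed.

Lemma psd_segment X D s t :
  psd X -> psd (X + s *: D) -> 0 < s -> 0 <= t <= s -> psd (X + t *: D).
Proof.
move=> pX pXs s_gt0 /andP[t_ge0 t_le_s].
have -> : X + t *: D = (1 - t / s) *: X + (t / s) *: (X + s *: D).
  by rewrite scalerDr scalerA divfK ?gt_eqF // addrA -scalerDl subrK scale1r.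
by apply: psdD; apply: psdZ; rewrite // ?subr_ge0 ?ler_pdivrMr ?mul1r ?divr_ge0 // ltW.
Qed.

Definition conic P := forall a Y, 0 <= a -> P Y -> P (a *: Y).

Lemma conicI P Q : conic P -> conic Q -> conic (fun Y => P Y /\ Q Y).
Proof. by move=> cP cQ a Y a_ge0 [PY QY]; split; [apply: cP | apply: cQ]. Qed.

Lemma rank_one_conic : conic (@rank_one R n).
Proof.
move=> a _ a_ge0 [x ->]; exists (Num.sqrt a *: x).
by rewrite linearZ /= -scalemxAl -scalemxAr scalerA -expr2 sqr_sqrtr.
Qed.

Lemma Scone_conic P : conic (Scone P).
Proof.
move=> a X a_ge0 [pX X_ge0]; split=> [|A PA]; first exact: psdZ.
by rewrite innerZr mulr_ge0 ?X_ge0.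
Qed.

Lemma Tcone_conic P : conic (Tcone P).
Proof.
move=> a X a_ge0 [pX X0]; split=> [|A PA]; first exact: psdZ.
by rewrite innerZr X0 ?mulr0.
Qed.

Lemma Scone0 P : Scone P 0.
Proof. by split=> [|A _]; rewrite ?inner0r //; exact: psd0. Qed.

Lemma SconeD P X Y : Scone P X -> Scone P Y -> Scone P (X + Y).
Proof.
move=> [pX X_ge0] [pY Y_ge0]; split=> [|A PA]; first exact: psdD.
by rewrite innerDr addr_ge0 ?X_ge0 ?Y_ge0.
Qed.

Definition sums_of P X :=
  exists2 s : seq 'M[R]_n, (forall Y, Y \in s -> P Y) & X = \sum_(Y <- s) Y.

Lemma sums_of1 P Y : P Y -> sums_of P Y.
Proof. by exists [:: Y]; rewrite ?big_seq1 // => Z; rewrite inE => /eqP ->. Qed.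

Lemma sums_ofD P X Y : sums_of P X -> sums_of P Y -> sums_of P (X + Y).
Proof.
move=> [s Ps ->] [t Pt ->]; exists (s ++ t); rewrite ?big_cat // => Z.
by rewrite mem_cat => /orP[/Ps|/Pt].
Qed.

Lemma sums_ofZ P a X : conic P -> 0 <= a -> sums_of P X -> sums_of P (a *: X).
Proof.
move=> cP a_ge0 [s Ps ->]; exists [seq a *: Y | Y <- s].
  by move=> _ /mapP[Y /Ps PY ->]; apply: cP.
by rewrite big_map scaler_sumr.
Qed.

Lemma Scone_sums_of P Q X :
  (forall Y, Q Y -> Scone P Y) -> sums_of Q X -> Scone P X.
Proof.
move=> QP [s Qs ->]; rewrite big_seq.
by apply: (big_ind (Scone P)) => [|Y Z|Y /Qs /QP //]; [exact: Scone0 | exact: SconeD].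
Qed.

Lemma conv_sums_of P X : conic P -> P 0 -> sums_of P X -> conv P X.
Proof.
(* Padding [s] with [0] keeps the family nonempty even when [s] is empty. *)
move=> cP P0 [s Ps ->]; set k := (size s).+1.
have k_neq0 : k%:R != 0 :> R by rewrite pnatr_eq0.
exists k, (fun=> k%:R^-1), (fun i => k%:R *: nth 0 (0 :: s) i); split.
- by move=> _; rewrite invr_ge0 ler0n.
- by rewrite sumr_const card_ord -[_ *+ k]mulr_natr mulVf.
- move=> i; apply: cP; first exact: ler0n.
  by have := @mem_nth _ 0 (0 :: s) i (ltn_ord i); rewrite inE => /orP[/eqP ->|/Ps].
have -> : \sum_(Y <- s) Y = \sum_(Y <- 0 :: s) Y by rewrite big_cons add0r.
rewrite (big_nth 0) big_mkord.
by apply: eq_bigr => i _; rewrite scalerA mulVf ?scale1r.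
Qed.

Lemma sums_of_conv P X : conic P -> conv P X -> sums_of P X.
Proof.
move=> cP [k [lam [Y [lam_ge0 _ PY ->]]]].
exists [seq lam i *: Y i | i <- enum 'I_k]; last by rewrite big_map big_enum.
by move=> _ /mapP[i _ ->]; apply: cP.
Qed.

End Cones.

Section FiniteConstraints.
Variables (R : realType) (n : nat) (M : seq 'M[R]_n).
Implicit Types (A X Y Z D W : 'M[R]_n).

Local Notation S := (Scone (fun A => A \in M)).
Local Notation S1 := (fun Y => S Y /\ rank_one Y).

Lemma S1_conic : conic S1.
Proof. exact: conicI (@Scone_conic _ _ _) (@rank_one_conic _ _). Qed.

Definition nslack X := count (fun A => 0 < inner A X) M.

Definition keeps_active X D := forall A, A \in M -> inner A X = 0 -> inner A D = 0.

Lemma S_or_violated X : psd X -> S X \/ exists2 A, A \in M & inner A X < 0.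
Proof.
move=> pX; have [X_ge0|/allPn[A AM]] := boolP (all (fun A => 0 <= inner A X) M).
  by left; split=> // A /(allP X_ge0).
by rewrite -ltNge; right; exists A.
Qed.

Lemma keeps_active_sum X s :
  (forall Y, Y \in s -> keeps_active X Y) -> keeps_active X (\sum_(Y <- s) Y).
Proof.
move=> act A AM AX; rewrite big_seq.
apply: (big_ind (fun Y => inner A Y = 0)) => [|Y Z AY AZ|Y /act/(_ A AM AX) //].
  exact: inner0r.
by rewrite innerDr AY AZ addr0.
Qed.

Lemma keeps_active_pos X Z : S X -> keeps_active X Z ->
  {in M, forall A, 0 < inner A Z -> 0 < inner A X}.
Proof.
move=> [_ X_ge0] act A AM AZ; rewrite lt_def X_ge0 // andbT.
by apply: contraTneq AZ => /(act A AM) ->; rewrite ltxx.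
Qed.

Lemma nslack_le X Z : S X -> keeps_active X Z -> (nslack Z <= nslack X)%N.
Proof. by move=> SX act; apply/sub_in_count/keeps_active_pos. Qed.

Lemma nslack_lt X Z : S X -> keeps_active X Z ->
  (exists2 A, A \in M & 0 < inner A X /\ inner A Z = 0) ->
  (nslack Z < nslack X)%N.
Proof.
move=> SX act [A AM [AX AZ]].
apply: (@sub_in_count_lt _ M (fun A => 0 < inner A Z)); first exact: keeps_active_pos.
by exists A; rewrite // AX AZ ltxx.
Qed.

Lemma keeps_active_nslack_eq X Z : S X -> keeps_active X Z ->
  nslack Z = nslack X -> keeps_active Z X.
Proof.
move=> SX act eq_slack A AM AZ; case: (eqVneq (inner A X) 0) => // AX.
have AX_gt0 : 0 < inner A X by rewrite lt_def AX; case: SX => _ ->.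
by have := nslack_lt SX act (ex_intro2 _ _ A AM (conj AX_gt0 AZ)); rewrite eq_slack ltnn.
Qed.

Lemma segment_exit X D s : S X -> keeps_active X D -> 0 < s -> psd (X + s *: D) ->
  (exists2 A, A \in M & inner A (X + s *: D) < 0) ->
  exists2 t, 0 < t <= s & S (X + t *: D) /\ (nslack (X + t *: D) < nslack X)%N.
Proof.
move=> SX act s_gt0 pXs [A0 A0M]; have [pX X_ge0] := SX.
rewrite innerDr innerZr => A0_neg.
have A0D : inner A0 D < 0 by have := X_ge0 A0 A0M; nra.
pose ratio A := inner A X / - inner A D.
have : has (fun A => inner A D < 0) M by apply/hasP; exists A0.
(* [t] is the first time a constraint with [<A, D> < 0] becomes active. *)
case/(seq_argmin ratio) => B /andP[BM BD] B_min; set t := ratio B.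
have BX : 0 < inner B X.
  by rewrite lt_def X_ge0 // andbT; apply: contraTneq BD => /(act B BM) ->; rewrite ltxx.
have t_gt0 : 0 < t by rewrite divr_gt0 // oppr_gt0.
have t_le_s : t <= s.
  by apply: le_trans (B_min A0 A0M A0D) _; rewrite ler_pdivrMr ?oppr_gt0 // mulrN; lra.
have XtD_ge0 A : A \in M -> 0 <= inner A (X + t *: D).
  move=> AM; rewrite innerDr innerZr; have [AD|AD] := ltP (inner A D) 0.
    by have := B_min A AM AD; rewrite ler_pdivlMr ?oppr_gt0 // -/t mulrN; lra.
  by rewrite addr_ge0 ?X_ge0 // mulr_ge0 // ltW.
exists t; first by rewrite t_gt0.
split.
  by split=> //; apply: (psd_segment pX pXs s_gt0); rewrite (ltW t_gt0) t_le_s.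
apply: nslack_lt => // [A AM AX|].
  by rewrite innerDr innerZr AX (act A AM AX) mulr0 addr0.
exists B => //; split=> //; rewrite innerDr innerZr /t /ratio.
by field; rewrite lt_eqF.
Qed.

Section Peel.
Variables X y : 'M[R]_n.
Hypotheses (SX : S X) (y_act : keeps_active X y).
Hypothesis IHX : forall Z, S Z -> (nslack Z < nslack X)%N -> sums_of S1 Z.

Lemma sums_of_retreat : psd (X - y) -> (S (X - y) -> sums_of S1 (X - y)) ->
  exists2 t, 0 < t & sums_of S1 (X - t *: y).
Proof.
move=> pW hW; have [SW|[A AM A_neg]] := S_or_violated pW.
  by exists 1 => //; rewrite scale1r; apply: hW.
have ny_act : keeps_active X (- y).
  by move=> B BM /(y_act BM); rewrite innerNr => ->; rewrite oppr0.
have pW1 : psd (X + 1 *: - y) by rewrite scale1r.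
have viol : exists2 A, A \in M & inner A (X + 1 *: - y) < 0 by exists A; rewrite ?scale1r.
have [t /andP[t_gt0 _] [St lt_slack]] := segment_exit SX ny_act ltr01 pW1 viol.
by exists t; rewrite // -scalerN; apply: IHX.
Qed.

Lemma sums_of_advance t : psd y -> rank_one y -> 0 < t ->
  sums_of S1 (X - t *: y) -> sums_of S1 X.
Proof.
move=> y_psd y_r1 t_gt0 hL.
have [Sy|[A AM A_neg]] := S_or_violated y_psd.
  rewrite -(subrK (t *: y) X); apply: sums_ofD hL (sums_ofZ S1_conic (ltW t_gt0) _).
  exact: sums_of1.
have [_ X_ge0] := SX; have AX := X_ge0 A AM.
(* chosen so that [<A, X + s y> = -1] *)
pose s := (inner A X + 1) / - inner A y.
have s_gt0 : 0 < s by rewrite divr_gt0 ?oppr_gt0 // ltr_wpDl.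
have pXs : psd (X + s *: y) by apply: psdD; [case: SX | apply: psdZ; rewrite ?ltW].
have viol : exists2 A, A \in M & inner A (X + s *: y) < 0.
  exists A; rewrite // innerDr innerZr /s.
  have -> : (inner A X + 1) / - inner A y * inner A y = - (inner A X + 1).
    by field; rewrite lt_eqF.
  lra.
have [u /andP[u_gt0 _] [Su lt_slack]] := segment_exit SX y_act s_gt0 pXs viol.
rewrite (combine_segment_ends X y (lt0r_neq0 (addr_gt0 t_gt0 u_gt0))).
apply: sums_ofZ S1_conic _ _; first by rewrite invr_ge0 ltW ?addr_gt0.
have hR : sums_of S1 (X + u *: y) by exact: IHX.
by apply: sums_ofD; apply: (sums_ofZ S1_conic) => //; exact: ltW.
Qed.

End Peel.

Lemma sums_of_rank_one_decomposition s X : S X ->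
  (forall Z, S Z -> (nslack Z < nslack X)%N -> sums_of S1 Z) ->
  (forall Y, Y \in s -> [/\ psd Y, rank_one Y & keeps_active X Y]) ->
  X = \sum_(Y <- s) Y -> sums_of S1 X.
Proof.
elim: s X => [|y s IHs] X SX IHX hs; rewrite ?big_nil ?big_cons => X_def.
  by exists [::]; rewrite ?big_nil.
set W := \sum_(Y <- s) Y in X_def.
have [y_psd y_r1 y_act] := hs y (mem_head _ _).
have {}hs Y : Y \in s -> [/\ psd Y, rank_one Y & keeps_active X Y].
  by move=> Ys; apply: hs; rewrite inE Ys orbT.
have W_psd : psd W.
  by rewrite /W big_seq; apply: big_ind => [|Y Z|Y /hs[] //]; [exact: psd0 | exact: psdD].
have W_act : keeps_active X W by apply: keeps_active_sum => Y /hs[].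
have hW : S W -> sums_of S1 W.
  move=> SW; have := nslack_le SX W_act.
  rewrite leq_eqVlt => /orP[/eqP eq_slack|]; last exact: IHX.
  (* W has the same active set as X, so its decomposition [s] is admissible. *)
  apply: IHs => // [Z|Y /hs[Y_psd Y_r1 Y_act]]; rewrite ?eq_slack; first exact: IHX.
  by split=> // A AM /(keeps_active_nslack_eq SX W_act eq_slack AM); apply: Y_act.
have W_def : X - y = W by rewrite X_def addrC addKr.
rewrite -W_def in W_psd hW.
have [t t_gt0] := sums_of_retreat SX y_act IHX W_psd hW.
exact: sums_of_advance.
Qed.

Lemma sums_of_S :
  (forall M' : 'M[R]_n -> Prop, (forall A, M' A -> A \in M) -> ROG (Tcone M')) ->
  forall X, S X -> sums_of S1 X.
Proof.
move=> T_rog X; have [k] := ubnP (nslack X); elim: k X => // k IHk X lt_k SX.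
pose active A := A \in M /\ inner A X = 0.
have TX : Tcone active X by split=> [|A []]; first by case: SX.
have T1_conic : conic (fun Y => Tcone active Y /\ rank_one Y).
  exact: conicI (@Tcone_conic _ _ _) (@rank_one_conic _ _).
have [s hs X_def] :=
  sums_of_conv T1_conic ((T_rog active (fun A => @proj1 _ _) X).1 TX).
apply: (sums_of_rank_one_decomposition SX _ _ X_def).
  by move=> Z SZ lt_slack; apply: IHk => //; exact: leq_trans lt_slack _.
by move=> Y /hs[[Y_psd Y_act] Y_r1]; split=> // A AM AX; apply: Y_act.
Qed.

End FiniteConstraints.

Theorem lemma2p15 (R : realType) (n : nat) (M : seq 'M[R]_n) :
  (forall A, A \in M -> symm A) ->
  (forall M' : 'M[R]_n -> Prop,
      (forall A, M' A -> A \in M) -> ROG (Tcone M')) ->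
  ROG (Scone (fun A => A \in M)).
Proof.
move=> _ T_rog X; split=> [SX|].
  apply: conv_sums_of; [exact: S1_conic | | exact: sums_of_S].
  by split; [exact: Scone0 | exists 0; rewrite mul0mx].
by move/(sums_of_conv (@S1_conic _ _ M)); apply: Scone_sums_of => Y [].
Qed.
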